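(* Let $d,D\ge 1$ and $n=2t+l$ with $t,l\ge 1$ integers. Fix any diagonal $\Omega=\mathrm{diag}(\omega_1,\dots,\omega_D)$ with $(\omega_i)$ a probability vector. For $(U,V,W,\Lambda)\in X:=U(dD)\times U(D)\times U(D)\times[0,1]^D$ (identifying $\Lambda\in[0,1]^D$ with the diagonal matrix it defines) let $$\rho_l(U,V,W,\Lambda,\Omega)=\mathrm{tr}_{A,B_1,\dots,B_t,B_{t+l+1},\dots,B_n}\Big(V\Lambda V^\dagger\, U_{A,B_1}\cdots U_{A,B_n}\big(W\Omega W^\dagger\otimes(|0\rangle\langle 0|)^{\otimes n}\big)U_{A,B_n}^\dagger\cdots U_{A,B_1}^\dagger\Big),$$ and define $f(U,V,W,\Lambda)=(\mathrm{tr}\,\rho_l(U,V,W,\Lambda,\Omega))^2$ and $g(U,V,W,\Lambda)=\mathrm{tr}\,\rho_l^2(U,V,W,\Lambda,\Omega)$. Equip $X$ with the metric $$d_1\big((U,V,W,\Lambda),(U',V',W',\Lambda')\big)=\|U-U'\|_2+\|V-V'\|_2+\|W-W'\|_2+\|\Lambda-\Lambda'\|_\infty.$$ Then the Lipschitz constants of both $f$ and $g$ with respect to $d_1$ are at most $4n+10$.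
   Context: $H_A\cong\mathbb{C}^D$ and $H_{B_1},\dots,H_{B_n}\cong\mathbb{C}^d$; $U_{A,B_i}$ denotes $U$ acting on $H_A\otimes H_{B_i}$ and as the identity elsewhere; $V\Lambda V^\dagger$ acts on $H_A$; $|0\rangle$ is a fixed unit vector in $\mathbb{C}^d$. $\|\cdot\|_2$ is the Hilbert–Schmidt norm and $\|\cdot\|_\infty$ is the operator norm (for diagonal $\Lambda$, the maximum absolute entry). *)

From mathcomp Require Import all_boot all_order all_algebra.
From mathcomp Require Import complex reals spectral.
Set Implicit Arguments. Unset Strict Implicit. Unset Printing Implicit Defensive.
Import Order.TTheory GRing.Theory Num.Theory.
Local Open Scope ring_scope.
Local Open Scope sesquilinear_scope.

Section QChannel.
Variable R : realType.
Local Notation C := R[i].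

Definition op (T : finType) := T -> T -> C.
Definition opmul (T : finType) (A B : op T) : op T :=
  fun x y => \sum_(z : T) A x z * B z y.
Definition opadj (T : finType) (A : op T) : op T := fun x y => (A y x)^*.
Definition opid (T : finType) : op T := fun x y => (x == y)%:R.
Definition optr (T : finType) (A : op T) : C := \sum_(x : T) A x x.

Variables (D d n : nat).

(* Index type of H_A (x) H_{B_1} (x) ... (x) H_{B_n}:
   a pair (a, b) with a : 'I_D and b i : 'I_d the index of B_(i+1). *)
Definition Ifull := ('I_D * {ffun 'I_n -> 'I_d})%type.

Definition liftA (P : 'M[C]_D) : op Ifull :=
  fun x y => P x.1 y.1 * (x.2 == y.2)%:R.

(* U : 'M_(D*d) acting on H_A (x) H_B (index of (a,b) is mxvec_index a b);
   U_{A,B_(i+1)} acts as U on H_A (x) H_{B_(i+1)} and as identity elsewhere. *)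
Definition UAB (U : 'M[C]_(D * d)) (i : 'I_n) : op Ifull :=
  fun x y => U (mxvec_index x.1 (x.2 i)) (mxvec_index y.1 (y.2 i))
             * [forall j : 'I_n, (j != i) ==> (x.2 j == y.2 j)]%:R.

Definition Uchain (U : 'M[C]_(D * d)) : op Ifull :=
  foldr (@opmul _) (@opid _) [seq UAB U i | i <- enum 'I_n].

(* W Omega W^dagger (x) (|0><0|)^{(x) n}, with |0> = v *)
Definition input (W : 'M[C]_D) (omega : 'rV[C]_D) (v : 'cV[C]_d) : op Ifull :=
  fun x y => (W *m diag_mx omega *m W ^t*) x.1 y.1
             * \prod_(i : 'I_n) (v (x.2 i) 0 * (v (y.2 i) 0)^*).

(* kept subsystems: B_(t+1), ..., B_(t+l), i.e. 0-based indices t <= i < t+l *)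
Definition kept (t l : nat) (i : 'I_n) : bool := (t <= i < t + l)%N.
Definition Kidx (t l : nat) := {ffun {i : 'I_n | kept t l i} -> 'I_d}.
Definition restrK (t l : nat) (b : {ffun 'I_n -> 'I_d}) : Kidx t l :=
  [ffun i => b (val i)].

Definition full_op (U : 'M[C]_(D * d)) (V W : 'M[C]_D) (Lam omega : 'rV[C]_D)
  (v : 'cV[C]_d) : op Ifull :=
  opmul (liftA (V *m diag_mx Lam *m V ^t*))
        (opmul (Uchain U) (opmul (input W omega v) (opadj (Uchain U)))).

(* partial trace over A, B_1..B_t, B_(t+l+1)..B_n *)
Definition rho_l (t l : nat) (U : 'M[C]_(D * d)) (V W : 'M[C]_D)
  (Lam omega : 'rV[C]_D) (v : 'cV[C]_d) : op (Kidx t l) :=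
  fun c c' =>
    \sum_(x : Ifull) \sum_(y : Ifull | [&& x.1 == y.1, restrK t l x.2 == c,
                                         restrK t l y.2 == c' &
                                         [forall j : 'I_n, ~~ kept t l j ==> (x.2 j == y.2 j)]])
      full_op U V W Lam omega v x y.

Definition f_fun (t l : nat) (U : 'M[C]_(D * d)) (V W : 'M[C]_D)
  (Lam omega : 'rV[C]_D) (v : 'cV[C]_d) : C :=
  (optr (@rho_l t l U V W Lam omega v)) ^+ 2.
Definition g_fun (t l : nat) (U : 'M[C]_(D * d)) (V W : 'M[C]_D)
  (Lam omega : 'rV[C]_D) (v : 'cV[C]_d) : C :=
  optr (opmul (@rho_l t l U V W Lam omega v) (@rho_l t l U V W Lam omega v)).

End QChannel.

Section Metric.
Variable R : realType.
Local Notation C := R[i].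

Definition HSnorm (m k : nat) (A : 'M[C]_(m, k)) : C :=
  sqrtC (\sum_(i < m) \sum_(j < k) `|A i j| ^+ 2).
(* operator norm of a diagonal matrix diag(Lam): max absolute entry *)
Definition supnorm (m : nat) (Lam : 'rV[C]_m) : C :=
  \big[Num.max/0]_(i < m) `|Lam 0 i|.

Definition d1 (D d : nat) (U U' : 'M[C]_(D * d)) (V V' W W' : 'M[C]_D)
  (Lam Lam' : 'rV[C]_D) : C :=
  HSnorm (U - U') + HSnorm (V - V') + HSnorm (W - W') + supnorm (Lam - Lam').
End Metric.

From mathcomp Require Import all_boot all_order all_algebra.
From mathcomp Require Import complex reals spectral.
From mathcomp Require Import ring.
Set Implicit Arguments. Unset Strict Implicit. Unset Printing Implicit Defensive.
Import Order.TTheory GRing.Theory Num.Theory.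
Local Open Scope ring_scope.
Local Open Scope sesquilinear_scope.

(* Write the input state as the mixture sum_k w_k |phi_k><phi_k| with
   phi_k = W e_k (x) |0>^(x)n.  Then rho_l = sum_k w_k tr_traced |alpha_k><psi_k|, where
   psi_k = U_{A,B_1}...U_{A,B_n} phi_k and alpha_k = (V Lam V^dag) psi_k are vectors of norm
   at most 1.  Changing one unitary (or Lam) at a time gives
     |psi_k - psi'_k| <= |W - W'|_2 + n |U - U'|_2,
     |alpha_k - alpha'_k| <= |psi_k - psi'_k| + 2 |V - V'|_2 + |Lam - Lam'|_oo.
   By Cauchy-Schwarz the partial trace of |a><b| has Hilbert-Schmidt norm at most |a| |b|,
   so |tr rho|, |rho|_2 <= 1 while |tr rho - tr rho'| and |rho - rho'|_2 are bounded by
   Delta = |alpha - alpha'| + |psi - psi'|.  Factoring x^2 - y^2 and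
   tr rho^2 - tr rho'^2 = tr ((rho - rho') rho) + tr (rho' (rho - rho')) bounds both f and g
   differences by 2 Delta <= (4n + 10) d_1. *)

Lemma big_pair (R : realType) (S Q : finType) (F : S * Q -> R[i]) :
  \sum_p F p = \sum_s \sum_q F (s, q).
Proof. by rewrite pair_bigA; apply: eq_bigr => -[]. Qed.

Section Vectors.
Variables (R : realType) (T : finType).
Local Notation C := R[i].
Implicit Types (a b : T -> C) (c : C).

Definition vdot a b : C := \sum_x a x * (b x)^*.
Definition vnorm2 a : C := vdot a a.
Definition vnorm a : C := sqrtC (vnorm2 a).
Definition row_of_fun a : 'rV[C]_#|T| := \row_i a (enum_val i).

Lemma vdotE a b : vdot a b = dotmx (row_of_fun a) (row_of_fun b).
Proof.
rewrite dotmxE !mxE /vdot (reindex _ (onW_bij _ (enum_val_bij T))) /=.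
by apply: eq_bigr => i _; rewrite !mxE.
Qed.

Lemma vnorm2E a : vnorm2 a = \sum_x `|a x| ^+ 2.
Proof. by apply: eq_bigr => x _; rewrite normCK. Qed.

Lemma vnorm2_ge0 a : 0 <= vnorm2 a.
Proof. by rewrite vnorm2E sumr_ge0 // => x _; rewrite exprn_ge0. Qed.

Lemma vnorm_ge0 a : 0 <= vnorm a.
Proof. by rewrite sqrtC_ge0 vnorm2_ge0. Qed.

Lemma vnormK a : vnorm a ^+ 2 = vnorm2 a.
Proof. exact: sqrtCK. Qed.

Lemma eq_vnorm a b : (forall x, a x = b x) -> vnorm a = vnorm b.
Proof. by move=> eq_ab; rewrite /vnorm /vnorm2 /vdot; under eq_bigr do rewrite eq_ab. Qed.

Lemma vnorm0 : vnorm (fun _ => 0) = 0.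
Proof. by rewrite /vnorm /vnorm2 /vdot big1 ?sqrtC0 // => x _; rewrite mul0r. Qed.

Lemma vdotBl a a' b : vdot a b - vdot a' b = vdot (fun x => a x - a' x) b.
Proof. by rewrite /vdot -sumrB; apply: eq_bigr => x _; rewrite mulrBl. Qed.

Lemma vdotBr a b b' : vdot a b - vdot a b' = vdot a (fun x => b x - b' x).
Proof. by rewrite /vdot -sumrB; apply: eq_bigr => x _; rewrite rmorphB mulrBr. Qed.

Lemma vdot_CauchySchwarz a b : `|vdot a b| <= vnorm a * vnorm b.
Proof. by rewrite /vnorm /vnorm2 !vdotE; exact: CauchySchwarz_sqrt. Qed.

Lemma vnormD_le a b : vnorm (fun x => a x + b x) <= vnorm a + vnorm b.
Proof.
rewrite /vnorm /vnorm2 !vdotE.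
have -> : row_of_fun (fun x => a x + b x) = row_of_fun a + row_of_fun b.
  by apply/rowP => i; rewrite !mxE.
exact: triangle_lerif.
Qed.

Lemma vnormZ c a : vnorm (fun x => c * a x) = `|c| * vnorm a.
Proof.
rewrite /vnorm; have -> : vnorm2 (fun x => c * a x) = `|c| ^+ 2 * vnorm2 a.
  by rewrite !vnorm2E mulr_sumr; apply: eq_bigr => x _; rewrite normrM exprMn.
by rewrite sqrtCM ?nnegrE ?exprn_ge0 ?vnorm2_ge0 // sqrCK.
Qed.

Lemma vnorm_sum_le (I : Type) (r : seq I) (P : pred I) (F : I -> T -> C) :
  vnorm (fun x => \sum_(k <- r | P k) F k x) <= \sum_(k <- r | P k) vnorm (F k).
Proof.
elim: r => [|k r IHr].
  by rewrite big_nil (@eq_vnorm _ (fun _ => 0)) ?vnorm0 // => x; rewrite big_nil.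
rewrite big_cons; under eq_vnorm do rewrite big_cons.
case: (P k) => //; apply: le_trans (vnormD_le _ _) _; by rewrite lerD2l.
Qed.

Lemma vnorm_le_of_vnorm2 a b c :
  0 <= c -> vnorm2 a <= c ^+ 2 * vnorm2 b -> vnorm a <= c * vnorm b.
Proof.
move=> c_ge0 le_ab; rewrite /vnorm -(sqrCK c_ge0) -sqrtCM ?nnegrE ?exprn_ge0 ?vnorm2_ge0 //.
by rewrite ler_sqrtC // nnegrE ?mulr_ge0 ?exprn_ge0 ?vnorm2_ge0.
Qed.

Lemma vnorm2_le_of_vnorm a b c :
  0 <= c -> vnorm a <= c * vnorm b -> vnorm2 a <= c ^+ 2 * vnorm2 b.
Proof.
by move=> c_ge0 le_ab; rewrite -!vnormK -exprMn ler_sqr // nnegrE ?mulr_ge0 ?vnorm_ge0.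
Qed.

End Vectors.

Section Operators.
Variables (R : realType) (T : finType).
Local Notation C := R[i].
Implicit Types (a b : T -> C) (A B : op R T) (c : C).

Definition opapp A a : T -> C := fun x => \sum_y A x y * a y.
Definition opbounded A c := forall a, vnorm (opapp A a) <= c * vnorm a.
Definition ophs A : C := vnorm (fun p : T * T => A p.1 p.2).

Lemma ophsE A : ophs A = sqrtC (\sum_x \sum_y `|A x y| ^+ 2).
Proof. by rewrite /ophs /vnorm vnorm2E pair_bigA. Qed.

Lemma ophs_ge0 A : 0 <= ophs A.
Proof. exact: vnorm_ge0. Qed.

Lemma eq_ophs A B : (forall x y, A x y = B x y) -> ophs A = ophs B.
Proof. by move=> eqAB; apply: eq_vnorm => p; rewrite eqAB. Qed.

Lemma norm_optr_opmul_le A B : `|optr (opmul A B)| <= ophs A * ophs B.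
Proof.
have -> : optr (opmul A B) = vdot (fun p : T * T => A p.1 p.2) (fun p => (B p.2 p.1)^*).
  by rewrite /vdot big_pair; apply: eq_bigr => x _; apply: eq_bigr => y _; rewrite conjCK.
apply: le_trans (vdot_CauchySchwarz _ _) _; rewrite ler_wpM2l ?ophs_ge0 // ophsE.
rewrite /vnorm vnorm2E big_pair exchange_big /=.
by under eq_bigr do under eq_bigr do rewrite norm_conjC.
Qed.

Lemma opappBr A a b x : opapp A (fun y => a y - b y) x = opapp A a x - opapp A b x.
Proof. by rewrite /opapp -sumrB; apply: eq_bigr => y _; rewrite mulrBr. Qed.

Lemma opappBl A B a x :
  opapp (fun x y => A x y - B x y) a x = opapp A a x - opapp B a x.
Proof. by rewrite /opapp -sumrB; apply: eq_bigr => y _; rewrite mulrBl. Qed.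

Lemma opappDl A B a x :
  opapp (fun x y => A x y + B x y) a x = opapp A a x + opapp B a x.
Proof. by rewrite /opapp -big_split; apply: eq_bigr => y _; rewrite mulrDl. Qed.

Lemma opappM A B a x : opapp (opmul A B) a x = opapp A (opapp B a) x.
Proof.
rewrite /opapp /opmul; under eq_bigr do rewrite mulr_suml.
rewrite exchange_big /=; apply: eq_bigr => z _.
by rewrite mulr_sumr; apply: eq_bigr => y _; rewrite mulrA.
Qed.

Lemma opapp1 a x : opapp (@opid R T) a x = a x.
Proof.
rewrite /opapp /opid (bigD1 x) //= eqxx mul1r big1 ?addr0 // => y /negPf.
by rewrite eq_sym => ->; rewrite mul0r.
Qed.

Lemma opbounded_ext A B c : (forall x y, A x y = B x y) -> opbounded A c -> opbounded B c.
Proof.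
move=> eqAB bA a; rewrite -(@eq_vnorm _ _ (opapp A a)) //.
by move=> x; apply: eq_bigr => y _; rewrite eqAB.
Qed.

Lemma opboundedD A B c c' :
  opbounded A c -> opbounded B c' -> opbounded (fun x y => A x y + B x y) (c + c').
Proof.
move=> bA bB a; rewrite (eq_vnorm (opappDl A B a)); apply: le_trans (vnormD_le _ _) _.
by rewrite mulrDl lerD.
Qed.

Lemma opboundedM A B c c' :
  0 <= c -> opbounded A c -> opbounded B c' -> opbounded (opmul A B) (c * c').
Proof.
move=> c_ge0 bA bB a; rewrite (eq_vnorm (opappM A B a)); apply: le_trans (bA _) _.
by rewrite -mulrA ler_wpM2l.
Qed.

Lemma opbounded_ophs A : opbounded A (ophs A).
Proof.
move=> a; apply: vnorm_le_of_vnorm2; first exact: ophs_ge0.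
rewrite ophsE sqrtCK vnorm2E mulr_suml; apply: ler_sum => x _.
have -> : opapp A a x = vdot (A x) (fun y => (a y)^*).
  by apply: eq_bigr => y _; rewrite conjCK.
have -> : vnorm2 a = vnorm2 (fun y => (a y)^*).
  by rewrite !vnorm2E; apply: eq_bigr => y _; rewrite norm_conjC.
rewrite -vnorm2E -!vnormK -exprMn ler_sqr ?nnegrE ?mulr_ge0 ?vnorm_ge0 //.
exact: vdot_CauchySchwarz.
Qed.

Lemma opbounded_isometry A :
  (forall y1 y2, \sum_x (A x y1)^* * A x y2 = (y1 == y2)%:R) -> opbounded A 1.
Proof.
move=> orthoA a; apply: vnorm_le_of_vnorm2 => //; rewrite expr1n mul1r le_eqVlt; apply/orP; left.
have orthoA' y1 y2 : \sum_x A x y1 * (A x y2)^* = (y1 == y2)%:R.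
  rewrite -[RHS]conjC_nat -orthoA rmorph_sum; apply: eq_bigr => x _.
  by rewrite rmorphM /= conjCK mulrC.
apply/eqP; rewrite /vnorm2 /vdot /opapp.
transitivity (\sum_y1 \sum_y2 (a y1 * (a y2)^*) * (y1 == y2)%:R).
  under eq_bigr do rewrite rmorph_sum mulr_suml.
  rewrite exchange_big /=; apply: eq_bigr => y1 _.
  under eq_bigr do rewrite mulr_sumr.
  rewrite exchange_big /=; apply: eq_bigr => y2 _.
  rewrite -orthoA' mulr_sumr; apply: eq_bigr => x _; rewrite rmorphM /=; ring.
apply: eq_bigr => y1 _; rewrite (bigD1 y1) //= eqxx mulr1 big1 ?addr0 // => y2.
by rewrite eq_sym => /negPf ->; rewrite mulr0.
Qed.

Lemma opbounded_diag (lam : T -> C) c :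
  0 <= c -> (forall x, `|lam x| <= c) -> opbounded (fun x y => lam x * (x == y)%:R) c.
Proof.
move=> c_ge0 lam_le a; apply: vnorm_le_of_vnorm2 => //.
rewrite !vnorm2E mulr_sumr; apply: ler_sum => x _.
have -> : opapp (fun x y => lam x * (x == y)%:R) a x = lam x * a x.
  rewrite /opapp (bigD1 x) //= eqxx mulr1 big1 ?addr0 // => y.
  by rewrite eq_sym => /negPf ->; rewrite mulr0 mul0r.
by rewrite normrM exprMn ler_wpM2r ?exprn_ge0 // ler_sqr ?nnegrE.
Qed.

End Operators.

Section Mixtures.
Variables (R : realType) (K : finType) (w : K -> R[i]).
Hypotheses (w_ge0 : forall k, 0 <= w k) (w_sum1 : \sum_k w k = 1).

Lemma norm_mixture_le (z : K -> R[i]) c : (forall k, `|z k| <= c) -> `|\sum_k w k * z k| <= c.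
Proof.
move=> z_le; apply: le_trans (ler_norm_sum _ _ _) _.
rewrite -[X in _ <= X]mul1r -w_sum1 mulr_suml; apply: ler_sum => k _.
by rewrite normrM ger0_norm // ler_wpM2l.
Qed.

Lemma ophs_mixture_le (T : finType) (A : K -> op R T) c : (forall k, ophs (A k) <= c) ->
  ophs (fun x y => \sum_k w k * A k x y) <= c.
Proof.
move=> A_le; apply: le_trans (vnorm_sum_le _ _ (fun k p => w k * A k p.1 p.2)) _.
rewrite -[X in _ <= X]mul1r -w_sum1 mulr_suml; apply: ler_sum => k _.
by rewrite (vnormZ (w k) (fun p : T * T => A k p.1 p.2)) ger0_norm // ler_wpM2l //; exact: A_le.
Qed.

End Mixtures.

Section TensorIdentity.
Variables (R : realType) (T S Q : finType).
Variables (split : T -> S * Q) (join : S * Q -> T).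
Hypotheses (splitK : cancel split join) (joinK : cancel join split).
Local Notation C := R[i].

Lemma big_split_join (F : T -> C) : \sum_x F x = \sum_s \sum_q F (join (s, q)).
Proof.
rewrite -(big_pair (fun p => F (join p))) (reindex join) //.
by exists split => y _; [rewrite joinK | rewrite splitK].
Qed.

Lemma opbounded_tensor1 (A : op R S) (M : op R T) c :
  (forall x y, M x y = A (split x).1 (split y).1 * ((split x).2 == (split y).2)%:R) ->
  0 <= c -> opbounded A c -> opbounded M c.
Proof.
move=> M_def c_ge0 bA a; apply: vnorm_le_of_vnorm2 => //.
pose slice (q : Q) s := a (join (s, q)).
have M_slice x : opapp M a x = opapp A (slice (split x).2) (split x).1.
  rewrite /opapp big_split_join; apply: eq_bigr => s _.
  rewrite (bigD1 (split x).2) //= big1 ?addr0; first by rewrite M_def joinK eqxx mulr1.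
  by move=> q nq; rewrite M_def joinK /= eq_sym (negPf nq) mulr0 mul0r.
rewrite /vnorm2 /vdot big_split_join (big_split_join (fun x => a x * (a x)^*)).
rewrite [X in X <= _]exchange_big [X in _ <= _ * X]exchange_big /= mulr_sumr.
apply: ler_sum => q _; under eq_bigr do rewrite M_slice joinK /=.
exact: (vnorm2_le_of_vnorm c_ge0 (bA (slice q))).
Qed.

End TensorIdentity.

Section OuterProducts.
Variables (R : realType) (T K : finType) (w : K -> R[i]) (a b : K -> T -> R[i]).
Variables (A B : op R T).
Hypothesis B_outer : forall x y, B x y = \sum_k w k * (a k x * (b k y)^*).

Lemma opmul_outerl x y : opmul A B x y = \sum_k w k * (opapp A (a k) x * (b k y)^*).
Proof.
rewrite /opmul; under eq_bigr do rewrite B_outer mulr_sumr.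
rewrite exchange_big /=; apply: eq_bigr => k _.
rewrite /opapp mulr_suml mulr_sumr; apply: eq_bigr => z _; ring.
Qed.

Lemma opmul_outer_adjr x y :
  opmul B (opadj A) x y = \sum_k w k * (a k x * (opapp A (b k) y)^*).
Proof.
rewrite /opmul /opadj; under eq_bigr do rewrite B_outer mulr_suml.
rewrite exchange_big /=; apply: eq_bigr => k _.
rewrite /opapp rmorph_sum mulr_sumr mulr_sumr; apply: eq_bigr => z _.
rewrite rmorphM /=; ring.
Qed.

End OuterProducts.

Lemma HSnorm_ge0 (R : realType) m k (A : 'M[R[i]]_(m, k)) : 0 <= HSnorm A.
Proof. by rewrite sqrtC_ge0 sumr_ge0 // => x _; rewrite sumr_ge0 // => y _; rewrite exprn_ge0. Qed.

Lemma forall_eq_restr (I A : finType) (P : pred I) (f g : {ffun I -> A}) :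
  [forall j, P j ==> (f j == g j)] =
  ([ffun j : {j | P j} => f (val j)] == [ffun j => g (val j)]).
Proof.
apply/forallP/eqP => [fg | fg j].
  by apply/ffunP => -[j Pj]; rewrite !ffunE; apply/eqP; exact: (implyP (fg j) Pj).
by apply/implyP => Pj; move/ffunP: fg => /(_ (exist _ j Pj)); rewrite !ffunE => ->.
Qed.

Section Gates.
Variables (R : realType) (D d n : nat).
Local Notation C := R[i].
Local Notation T := (Ifull D d n).
Implicit Types (i : 'I_n) (U : 'M[C]_(D * d)).

Definition mxvec_pair (s : 'I_D * 'I_d) : 'I_(D * d) := mxvec_index s.1 s.2.

Lemma mxvec_pair_inj : injective mxvec_pair.
Proof. by move=> [a b] [a' b'] /cast_ord_inj/enum_rank_inj. Qed.

Lemma big_mxvec_pair (F : 'I_(D * d) -> C) : \sum_k F k = \sum_s F (mxvec_pair s).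
Proof.
rewrite (reindex mxvec_pair) //.
exists (fun k => enum_val (cast_ord (esym (mxvec_cast D d)) k)).
  by move=> [a b] _; rewrite /mxvec_pair /mxvec_index cast_ordK enum_rankK.
by move=> k _; case/mxvec_indexP: k => a b; rewrite /mxvec_pair cast_ordK enum_rankK.
Qed.

Definition pairop (U : 'M[C]_(D * d)) : op R ('I_D * 'I_d)%type :=
  fun s s' => U (mxvec_pair s) (mxvec_pair s').

Lemma pairop_isometry (U : 'M[C]_(D * d)) : U \is unitarymx -> opbounded (pairop U) 1.
Proof.
rewrite -trmxC_unitary => /unitarymxP; rewrite trmxCK => /matrixP uU.
apply: opbounded_isometry => s1 s2; have := uU (mxvec_pair s1) (mxvec_pair s2).
rewrite !mxE (inj_eq mxvec_pair_inj) => <-; rewrite big_mxvec_pair.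
by apply: eq_bigr => s _; rewrite !mxE.
Qed.

Lemma ophs_pairop (U : 'M[C]_(D * d)) : ophs (pairop U) = HSnorm U.
Proof.
by rewrite ophsE /HSnorm big_mxvec_pair; congr sqrtC; apply: eq_bigr => s _; rewrite big_mxvec_pair.
Qed.

Definition Rest (i : 'I_n) := {ffun {j : 'I_n | j != i} -> 'I_d}.

Definition split_at (i : 'I_n) (x : T) : ('I_D * 'I_d) * Rest i :=
  ((x.1, x.2 i), [ffun j => x.2 (val j)]).
Definition join_at (i : 'I_n) (p : ('I_D * 'I_d) * Rest i) : T :=
  (p.1.1, [ffun j => if insub j is Some j' then p.2 j' else p.1.2]).
Arguments split_at : clear implicits.
Arguments join_at : clear implicits.

Lemma split_atK i : cancel (split_at i) (join_at i).
Proof.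
move=> [a b]; congr (_, _); apply/ffunP => j; rewrite !ffunE.
case: insubP => [j' _ <-|]; first by rewrite ffunE.
by rewrite negbK => /eqP ->.
Qed.

Lemma join_atK i : cancel (join_at i) (split_at i).
Proof.
move=> [[a b] q]; rewrite /split_at /join_at /=; congr ((_, _), _).
  by rewrite ffunE insubF // eqxx.
apply/ffunP => -[j ji]; rewrite !ffunE /= insubT /=; congr (q _); exact: val_inj.
Qed.

Lemma UAB_tensor1 (U : 'M[C]_(D * d)) i x y :
  UAB U i x y =
  pairop U (split_at i x).1 (split_at i y).1 * ((split_at i x).2 == (split_at i y).2)%:R.
Proof. by rewrite /UAB /pairop forall_eq_restr. Qed.

Lemma UAB_isometry (U : 'M[C]_(D * d)) i : U \is unitarymx -> opbounded (UAB U i) 1.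
Proof.
move=> uU; apply: (opbounded_tensor1 (@split_atK i) (@join_atK i) (A := pairop U)) => //.
  exact: UAB_tensor1.
exact: pairop_isometry.
Qed.

Lemma opbounded_UABB (U U' : 'M[C]_(D * d)) i :
  opbounded (fun x y => UAB U i x y - UAB U' i x y) (HSnorm (U - U')).
Proof.
apply: (opbounded_tensor1 (@split_atK i) (@join_atK i) (A := pairop (U - U'))).
- by move=> x y; rewrite -UAB_tensor1 /UAB !mxE mulrBl.
- exact: HSnorm_ge0.
- by rewrite -ophs_pairop; exact: opbounded_ophs.
Qed.

(* [Uchain U] is convertible to [uchain U (enum 'I_n)]. *)
Definition uchain (U : 'M[C]_(D * d)) (s : seq 'I_n) : op R T :=
  foldr (@opmul R T) (@opid R T) [seq UAB U i | i <- s].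

Lemma uchain_contraction (U : 'M[C]_(D * d)) s (a : T -> C) :
  U \is unitarymx -> vnorm (opapp (uchain U s) a) <= vnorm a.
Proof.
move=> uU; elim: s a => [|i s IHs] a; first by rewrite (eq_vnorm (opapp1 a)).
rewrite (eq_vnorm (opappM _ _ a)); apply: le_trans (UAB_isometry i uU _) _.
by rewrite mul1r IHs.
Qed.

(* Telescoping: swap the gates of [U] for those of [U'] one at a time. *)
Lemma uchain_lipschitz (U U' : 'M[C]_(D * d)) s (a : T -> C) :
  U \is unitarymx -> U' \is unitarymx ->
  vnorm (fun x => opapp (uchain U s) a x - opapp (uchain U' s) a x) <=
    (size s)%:R * HSnorm (U - U') * vnorm a.
Proof.
move=> uU uU'; elim: s => [|i s IHs].
  by rewrite !mul0r (@eq_vnorm _ _ _ (fun _ => 0)) ?vnorm0 // => x; rewrite !opapp1 subrr.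
pose b := opapp (uchain U s) a; pose b' := opapp (uchain U' s) a.
rewrite (@eq_vnorm _ _ _ (fun x => opapp (UAB U i) (fun y => b y - b' y) x +
                      opapp (fun x y => UAB U i x y - UAB U' i x y) b' x)); last first.
  by move=> x; rewrite /uchain /= !opappM opappBr opappBl addrA subrK.
apply: le_trans (vnormD_le _ _) _.
rewrite /= -add1n natrD !mulrDl mul1r [X in _ <= X]addrC lerD //.
  by apply: le_trans (UAB_isometry i uU _) _; rewrite mul1r IHs.
apply: le_trans (opbounded_UABB U U' i b') _.
by rewrite ler_wpM2l ?HSnorm_ge0 ?uchain_contraction.
Qed.

End Gates.

Section SupNorm.
Variable R : realType.
Local Notation C := R[i].

Lemma bigmax_nonneg_spec (I : eqType) (r : seq I) (F : I -> C) : (forall j, 0 <= F j) ->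
  let m := \big[Num.max/0]_(j <- r) F j in
  [/\ m \is Num.real, 0 <= m & forall i, i \in r -> F i <= m].
Proof.
move=> F_ge0; elim: r => [|j r [m_real m_ge0 le_m]] /=; first by rewrite big_nil.
rewrite big_cons.
have cmp : F j >=< \big[Num.max/0]_(j <- r) F j by apply: real_comparable; rewrite ?ger0_real.
split.
- by rewrite comparable_maxEge //; case: ifP; rewrite ?ger0_real.
- by rewrite comparable_le_max // m_ge0 orbT.
- move=> i; rewrite inE => /orP [/eqP ->|ir]; rewrite comparable_le_max //.
    by rewrite lexx.
  by rewrite le_m // orbT.
Qed.

Lemma ler_supnorm m (L : 'rV[C]_m) i : `|L 0 i| <= supnorm L.
Proof.
by have [_ _ ->] := bigmax_nonneg_spec (index_enum 'I_m) (fun j => normr_ge0 (L 0 j)).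
Qed.

Lemma supnorm_ge0 m (L : 'rV[C]_m) : 0 <= supnorm L.
Proof. by have [] := bigmax_nonneg_spec (index_enum 'I_m) (fun j => normr_ge0 (L 0 j)). Qed.

End SupNorm.

Section MatrixBounds.
Variables (R : realType) (D : nat).
Local Notation C := R[i].
Implicit Types (A B V : 'M[C]_D) (L : 'rV[C]_D) (c : C).

Definition mxbounded A c := opbounded (fun i j => A i j) c.

Lemma mxboundedM A B c c' :
  0 <= c -> mxbounded A c -> mxbounded B c' -> mxbounded (A *m B) (c * c').
Proof.
move=> c_ge0 bA bB; apply: (opbounded_ext (A := opmul (fun i j => A i j) (fun i j => B i j))).
  by move=> x y; rewrite mxE.
exact: opboundedM.
Qed.

Lemma mxboundedD A B c c' : mxbounded A c -> mxbounded B c' -> mxbounded (A + B) (c + c').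
Proof.
move=> bA bB; apply: (opbounded_ext (A := fun i j => A i j + B i j)).
  by move=> x y; rewrite mxE.
exact: opboundedD.
Qed.

Lemma mxbounded_isometry A : A ^t* *m A = 1%:M -> mxbounded A 1.
Proof.
move/matrixP=> isoA; apply: opbounded_isometry => s1 s2; have := isoA s1 s2.
by rewrite !mxE => <-; apply: eq_bigr => s _; rewrite !mxE.
Qed.

Lemma mxbounded_unitary V : V \is unitarymx -> mxbounded V 1.
Proof.
by rewrite -trmxC_unitary => /unitarymxP; rewrite trmxCK; exact: mxbounded_isometry.
Qed.

Lemma mxbounded_unitary_adj V : V \is unitarymx -> mxbounded (V ^t*) 1.
Proof. by move=> uV; apply: mxbounded_isometry; rewrite trmxCK; apply/unitarymxP. Qed.

Lemma mxbounded_diag L c : 0 <= c -> (forall i, `|L 0 i| <= c) -> mxbounded (diag_mx L) c.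
Proof.
move=> c_ge0 L_le; apply: (opbounded_ext (A := fun s s' => L 0 s * (s == s')%:R)).
  by move=> x y; rewrite mxE mulr_natr.
exact: opbounded_diag.
Qed.

Lemma mxbounded_contraction_diag L :
  (forall i, 0 <= L 0 i <= 1) -> mxbounded (diag_mx L) 1.
Proof. by move=> L01; apply: mxbounded_diag => // i; case/andP: (L01 i) => *; rewrite ger0_norm. Qed.

Lemma mxbounded_HSnorm A : mxbounded A (HSnorm A).
Proof. by have := opbounded_ophs (fun i j : 'I_D => A i j); rewrite ophsE. Qed.

Lemma mxbounded_HSnorm_adj A : mxbounded (A ^t*) (HSnorm A).
Proof.
have -> : HSnorm A = HSnorm (A ^t*).
  rewrite /HSnorm exchange_big /=; congr sqrtC; apply: eq_bigr => i _.
  by apply: eq_bigr => j _; rewrite !mxE norm_conjC.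
exact: mxbounded_HSnorm.
Qed.

Definition conjdiag V L := V *m diag_mx L *m V ^t*.

Lemma mxbounded_conjdiag V L : V \is unitarymx ->
  (forall i, 0 <= L 0 i <= 1) -> mxbounded (conjdiag V L) 1.
Proof.
move=> uV L01; suff : mxbounded (conjdiag V L) (1 * 1 * 1) by rewrite !mulr1.
apply: mxboundedM; [by rewrite mulr1 | | exact: mxbounded_unitary_adj].
by apply: mxboundedM; [| exact: mxbounded_unitary | exact: mxbounded_contraction_diag].
Qed.

Lemma conjdiagB V V' L L' :
  conjdiag V L - conjdiag V' L' =
  (V - V') *m diag_mx L *m V ^t* + V' *m diag_mx (L - L') *m V ^t*
  + V' *m diag_mx L' *m (V - V') ^t*.
Proof.
have -> : (V - V') ^t* = V ^t* - V' ^t* by apply/matrixP => i j; rewrite !mxE rmorphB.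
have -> : diag_mx (L - L') = diag_mx L - diag_mx L' by apply/matrixP => i j; rewrite !mxE mulrnBl.
by rewrite /conjdiag !mulmxBl !mulmxBr !mulmxBl !addrA !subrK.
Qed.

Lemma mxbounded_conjdiagB V V' L L' : V \is unitarymx -> V' \is unitarymx ->
  (forall i, 0 <= L 0 i <= 1) -> (forall i, 0 <= L' 0 i <= 1) ->
  mxbounded (conjdiag V L - conjdiag V' L') (2 * HSnorm (V - V') + supnorm (L - L')).
Proof.
move=> uV uV' L01 L'01.
have -> : 2 * HSnorm (V - V') + supnorm (L - L') =
  HSnorm (V - V') * 1 * 1 + 1 * supnorm (L - L') * 1 + 1 * 1 * HSnorm (V - V') by ring.
rewrite conjdiagB; apply: mxboundedD; first apply: mxboundedD.
- apply: mxboundedM; [by rewrite mulr_ge0 ?HSnorm_ge0 | | exact: mxbounded_unitary_adj].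
  apply: mxboundedM; [exact: HSnorm_ge0 | exact: mxbounded_HSnorm |].
  exact: mxbounded_contraction_diag.
- apply: mxboundedM; [by rewrite mulr_ge0 ?supnorm_ge0 | | exact: mxbounded_unitary_adj].
  apply: mxboundedM; [by [] | exact: mxbounded_unitary |].
  by apply: mxbounded_diag; [exact: supnorm_ge0 | exact: ler_supnorm].
- apply: mxboundedM; [by rewrite mulr_ge0 | | exact: mxbounded_HSnorm_adj].
  apply: mxboundedM; [by [] | exact: mxbounded_unitary |].
  exact: mxbounded_contraction_diag.
Qed.

Lemma opbounded_liftA (d n : nat) A c : 0 <= c -> mxbounded A c -> opbounded (@liftA R D d n A) c.
Proof. exact: (@opbounded_tensor1 R (Ifull D d n) _ _ id id). Qed.

End MatrixBounds.

Section Amplitudes.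
Variables (R : realType) (D d n : nat) (v : 'cV[R[i]]_d).
Local Notation C := R[i].
Local Notation T := (Ifull D d n).
Implicit Types (U : 'M[C]_(D * d)) (M V W : 'M[C]_D) (L : 'rV[C]_D) (k : 'I_D).

Definition inputv M k (x : T) : C := M x.1 k * \prod_j v (x.2 j) 0.

Lemma input_outer W (omega : 'rV[C]_D) (x y : T) :
  @input R D d n W omega v x y = \sum_k omega 0 k * (inputv W k x * (inputv W k y)^*).
Proof.
rewrite /input mul_mx_diag !mxE big_split /= mulr_suml.
by apply: eq_bigr => k _; rewrite !mxE /inputv rmorphM rmorph_prod /=; ring.
Qed.

Definition evolved U W k : T -> C := opapp (@Uchain R D d n U) (inputv W k).
Definition projected U V W L k : T -> C := opapp (@liftA R D d n (conjdiag V L)) (evolved U W k).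

Lemma full_op_outer U V W L (omega : 'rV[C]_D) (x y : T) :
  @full_op R D d n U V W L omega v x y =
  \sum_k omega 0 k * (projected U V W L k x * (evolved U W k y)^*).
Proof.
apply: opmul_outerl => {}x {}y; apply: opmul_outerl => {}x {}y.
by apply: opmul_outer_adjr => {}x {}y; apply: input_outer.
Qed.

Hypothesis v_unit : \sum_(i < d) `|v i 0| ^+ 2 = 1.

Lemma vnorm2_inputv M k : vnorm2 (inputv M k) = \sum_a `|M a k| ^+ 2.
Proof.
have tensor_unit : \sum_(b : {ffun 'I_n -> 'I_d}) \prod_j `|v (b j) 0| ^+ 2 = 1.
  rewrite -(bigA_distr_bigA (fun (j : 'I_n) (c : 'I_d) => `|v c 0| ^+ 2)).
  by rewrite big1 // => j _; rewrite v_unit.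
rewrite vnorm2E big_pair; apply: eq_bigr => a _.
rewrite -[RHS]mulr1 -tensor_unit mulr_sumr; apply: eq_bigr => b _.
by rewrite /inputv normrM exprMn normr_prod prodrXl.
Qed.

Lemma vnorm_inputv_unitary W k : W \is unitarymx -> vnorm (inputv W k) = 1.
Proof.
rewrite -trmxC_unitary => /unitarymxP; rewrite trmxCK => /matrixP/(_ k k).
rewrite !mxE eqxx /= => col_unit.
rewrite /vnorm vnorm2_inputv -[RHS]sqrtC1; congr sqrtC; apply: etrans col_unit.
by apply: eq_bigr => a _; rewrite !mxE normCK mulrC.
Qed.

Lemma vnorm_inputvB W W' k :
  vnorm (fun x => inputv W k x - inputv W' k x) <= HSnorm (W - W').
Proof.
rewrite (@eq_vnorm _ _ _ (inputv (W - W') k)); last by move=> x; rewrite /inputv !mxE mulrBl.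
rewrite /vnorm vnorm2_inputv ler_sqrtC ?nnegrE; last 2 first.
- by apply: sumr_ge0 => a _; rewrite exprn_ge0.
- by apply: sumr_ge0 => a _; apply: sumr_ge0 => b _; rewrite exprn_ge0.
apply: ler_sum => a _; rewrite (bigD1 k) //= lerDl.
by apply: sumr_ge0 => b _; rewrite exprn_ge0.
Qed.

End Amplitudes.

Section AmplitudeBounds.
Variables (R : realType) (D d n : nat) (v : 'cV[R[i]]_d).
Hypothesis v_unit : \sum_(i < d) `|v i 0| ^+ 2 = 1.
Local Notation C := R[i].
Local Notation T := (Ifull D d n).
Local Notation evolved := (@evolved R D d n v).
Local Notation projected := (@projected R D d n v).
Implicit Types (U : 'M[C]_(D * d)) (V W : 'M[C]_D) (L : 'rV[C]_D) (k : 'I_D).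

Lemma vnorm_evolved_le1 U W k :
  U \is unitarymx -> W \is unitarymx -> vnorm (evolved U W k) <= 1.
Proof.
by move=> uU uW; apply: le_trans (uchain_contraction _ _ uU) _; rewrite vnorm_inputv_unitary.
Qed.

Lemma vnorm_projected_le1 U V W L k :
  U \is unitarymx -> V \is unitarymx -> W \is unitarymx -> (forall i, 0 <= L 0 i <= 1) ->
  vnorm (projected U V W L k) <= 1.
Proof.
move=> uU uV uW L01.
apply: le_trans (opbounded_liftA _ (mxbounded_conjdiag uV L01) _) _ => //.
by rewrite mul1r vnorm_evolved_le1.
Qed.

Lemma vdot_projected_evolved_le1 U V W L k :
  U \is unitarymx -> V \is unitarymx -> W \is unitarymx -> (forall i, 0 <= L 0 i <= 1) ->
  `|vdot (projected U V W L k) (evolved U W k)| <= 1.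
Proof.
move=> uU uV uW L01; apply: le_trans (vdot_CauchySchwarz _ _) _; rewrite -[X in _ <= X]mul1r.
by apply: ler_pM; rewrite ?vnorm_ge0 ?vnorm_projected_le1 ?vnorm_evolved_le1.
Qed.

Variables (U U' : 'M[C]_(D * d)) (V V' W W' : 'M[C]_D) (L L' : 'rV[C]_D).
Hypotheses (uU : U \is unitarymx) (uU' : U' \is unitarymx).
Hypotheses (uV : V \is unitarymx) (uV' : V' \is unitarymx).
Hypotheses (uW : W \is unitarymx) (uW' : W' \is unitarymx).
Hypotheses (L01 : forall i, 0 <= L 0 i <= 1) (L'01 : forall i, 0 <= L' 0 i <= 1).

Definition dist_evolved : C := HSnorm (W - W') + n%:R * HSnorm (U - U').
Definition dist_projected : C := dist_evolved + (2 * HSnorm (V - V') + supnorm (L - L')).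

Lemma vnorm_evolvedB k :
  vnorm (fun x => evolved U W k x - evolved U' W' k x) <= dist_evolved.
Proof.
rewrite (@eq_vnorm _ _ _ (fun x =>
    opapp (Uchain U) (fun y => inputv v W k y - inputv v W' k y) x +
    (opapp (uchain U (enum 'I_n)) (inputv v W' k) x -
     opapp (uchain U' (enum 'I_n)) (inputv v W' k) x))); last first.
  by move=> x; rewrite /evolved opappBr addrA subrK.
apply: le_trans (vnormD_le _ _) _; apply: lerD.
  by apply: le_trans (uchain_contraction _ _ uU) _; exact: vnorm_inputvB.
apply: le_trans (uchain_lipschitz _ _ uU uU') _.
by rewrite size_enum_ord vnorm_inputv_unitary // mulr1.
Qed.

Lemma vnorm_projectedB k :
  vnorm (fun x => projected U V W L k x - projected U' V' W' L' k x) <= dist_projected.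
Proof.
pose P := @liftA R D d n (conjdiag V L); pose P' := @liftA R D d n (conjdiag V' L').
rewrite (@eq_vnorm _ _ _ (fun x =>
    opapp P (fun y => evolved U W k y - evolved U' W' k y) x +
    opapp (@liftA R D d n (conjdiag V L - conjdiag V' L')) (evolved U' W' k) x)); last first.
  move=> x; have -> : opapp (@liftA R D d n (conjdiag V L - conjdiag V' L')) (evolved U' W' k) x =
                     opapp P (evolved U' W' k) x - opapp P' (evolved U' W' k) x.
    by rewrite -opappBl; apply: eq_bigr => y _; rewrite /P /P' /liftA !mxE mulrBl.
  by rewrite opappBr addrA subrK.
apply: le_trans (vnormD_le _ _) _; apply: lerD.
  apply: le_trans (opbounded_liftA _ (mxbounded_conjdiag uV L01) _) _ => //.
  by rewrite mul1r vnorm_evolvedB.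
have gap_ge0 : 0 <= 2 * HSnorm (V - V') + supnorm (L - L').
  by rewrite addr_ge0 ?mulr_ge0 ?HSnorm_ge0 ?supnorm_ge0.
apply: le_trans (opbounded_liftA gap_ge0 (mxbounded_conjdiagB uV uV' L01 L'01) _) _.
by rewrite ler_piMr // vnorm_evolved_le1.
Qed.

Lemma vdot_projected_evolvedB k :
  `|vdot (projected U V W L k) (evolved U W k) - vdot (projected U' V' W' L' k) (evolved U' W' k)|
    <= dist_projected + dist_evolved.
Proof.
rewrite -(subrK (vdot (projected U' V' W' L' k) (evolved U W k)) (vdot _ _)) -addrA vdotBl vdotBr.
apply: le_trans (ler_normD _ _) _; apply: lerD; apply: le_trans (vdot_CauchySchwarz _ _) _.
  by rewrite -[X in _ <= X]mulr1 ler_pM ?vnorm_ge0 ?vnorm_projectedB ?vnorm_evolved_le1.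
by rewrite -[X in _ <= X]mul1r ler_pM ?vnorm_ge0 ?vnorm_projected_le1 ?vnorm_evolvedB.
Qed.

End AmplitudeBounds.

Section PartialTrace.
Variables (R : realType) (D d n t l : nat) (z0 : 'I_d).
Local Notation C := R[i].
Local Notation T := (Ifull D d n).
Local Notation KI := (Kidx d n t l).

Definition Traced := ('I_D * {ffun {j : 'I_n | ~~ kept t l j} -> 'I_d})%type.

Definition split_kept (x : T) : KI * Traced := (restrK t l x.2, (x.1, [ffun j => x.2 (val j)])).

(* The final [z0] is never reached: every index is either kept or traced out. *)
Definition join_kept (p : KI * Traced) : T :=
  (p.2.1, [ffun j => if insub j is Some jk then p.1 jk
                     else if insub j is Some jr then p.2.2 jr else z0]).

Lemma split_keptK : cancel split_kept join_kept.
Proof.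
move=> [a b]; rewrite /split_kept /join_kept /=; congr (_, _); apply/ffunP => j.
rewrite !ffunE; case: insubP => [jk _ <-|not_kept_j]; first by rewrite ffunE.
by rewrite insubT /= ffunE.
Qed.

Lemma join_keptK : cancel join_kept split_kept.
Proof.
move=> [c [a q]]; rewrite /split_kept /join_kept /=; congr (_, (_, _)).
  by apply/ffunP => -[j kj]; rewrite !ffunE /= insubT /=; congr (c _); exact: val_inj.
apply/ffunP => -[j kj]; rewrite !ffunE /= insubF; last exact/negbTE.
by rewrite insubT /=; congr (q _); exact: val_inj.
Qed.

Lemma ptrace_condE (x y : T) (c c' : KI) :
  [&& x.1 == y.1, restrK t l x.2 == c, restrK t l y.2 == c' &
      [forall j : 'I_n, ~~ kept t l j ==> (x.2 j == y.2 j)]] =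
  [&& (split_kept x).1 == c, (split_kept y).1 == c' & (split_kept x).2 == (split_kept y).2].
Proof.
rewrite /split_kept /= xpair_eqE (forall_eq_restr (fun j => ~~ kept t l j)).
by case: (x.1 == y.1); case: (restrK t l x.2 == c); case: (restrK t l y.2 == c').
Qed.

Lemma big_ptrace_cond (F : T -> T -> C) (c c' : KI) :
  \sum_(x : T) \sum_(y : T | [&& x.1 == y.1, restrK t l x.2 == c, restrK t l y.2 == c' &
      [forall j : 'I_n, ~~ kept t l j ==> (x.2 j == y.2 j)]]) F x y =
  \sum_(e : Traced) F (join_kept (c, e)) (join_kept (c', e)).
Proof.
have inner x : \sum_(y | [&& x.1 == y.1, restrK t l x.2 == c, restrK t l y.2 == c' &
      [forall j : 'I_n, ~~ kept t l j ==> (x.2 j == y.2 j)]]) F x y =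
    if (split_kept x).1 == c then F x (join_kept (c', (split_kept x).2)) else 0.
  rewrite big_mkcond (big_split_join split_keptK join_keptK).
  under eq_bigr do under eq_bigr do rewrite ptrace_condE join_keptK /=.
  case: eqP => _ /=; last by apply: big1 => s _; apply: big1.
  rewrite (bigD1 c') //= [X in _ + X]big1 ?addr0; last first.
    by move=> s ns; apply: big1 => q _; rewrite (negPf ns).
  rewrite (bigD1 (split_kept x).2) //= [X in _ + X]big1 ?addr0 ?eqxx //.
  by move=> q nq; rewrite eq_sym (negPf nq) andbF.
under eq_bigr do rewrite inner.
rewrite (big_split_join split_keptK join_keptK).
under eq_bigr do under eq_bigr do rewrite join_keptK.
rewrite (bigD1 c) //= [X in _ + X]big1 ?addr0; last first.
  by move=> s ns; apply: big1 => q _; rewrite (negPf ns).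
by apply: eq_bigr => e _; rewrite eqxx.
Qed.

Definition ptrace_outer (a b : T -> C) : op R KI :=
  fun c c' => \sum_(e : Traced) a (join_kept (c, e)) * (b (join_kept (c', e)))^*.

Lemma vdot_ptrace (a b : T -> C) : vdot a b = optr (ptrace_outer a b).
Proof. exact: (big_split_join split_keptK join_keptK). Qed.

Lemma ptrace_outerBl (a a' b : T -> C) c c' :
  ptrace_outer a b c c' - ptrace_outer a' b c c' = ptrace_outer (fun x => a x - a' x) b c c'.
Proof. by rewrite /ptrace_outer -sumrB; apply: eq_bigr => e _; rewrite mulrBl. Qed.

Lemma ptrace_outerBr (a b b' : T -> C) c c' :
  ptrace_outer a b c c' - ptrace_outer a b' c c' = ptrace_outer a (fun x => b x - b' x) c c'.
Proof. by rewrite /ptrace_outer -sumrB; apply: eq_bigr => e _; rewrite rmorphB mulrBr. Qed.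

Lemma ophs_ptrace_outer_le (a b : T -> C) : ophs (ptrace_outer a b) <= vnorm a * vnorm b.
Proof.
have ab_ge0 : 0 <= vnorm a * vnorm b by rewrite mulr_ge0 ?vnorm_ge0.
have slices (x : T -> C) : vnorm2 x = \sum_c vnorm2 (fun e => x (join_kept (c, e))).
  exact: vdot_ptrace.
rewrite /ophs /vnorm -(sqrCK ab_ge0) ler_sqrtC ?nnegrE ?vnorm2_ge0 ?exprn_ge0 //.
rewrite exprMn !sqrtCK (slices a) (slices b) vnorm2E big_pair mulr_suml.
apply: ler_sum => c _; rewrite mulr_sumr; apply: ler_sum => c' _ /=.
have := vdot_CauchySchwarz (fun e => a (join_kept (c, e))) (fun e => b (join_kept (c', e))).
by rewrite -!vnormK -exprMn => CS; rewrite ler_sqr ?nnegrE ?mulr_ge0 ?vnorm_ge0.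
Qed.

Variables (U : 'M[C]_(D * d)) (V W : 'M[C]_D) (L omega : 'rV[C]_D) (v : 'cV[C]_d).
Local Notation projected := (@projected R D d n v).
Local Notation evolved := (@evolved R D d n v).

Lemma rho_l_mixture c c' :
  @rho_l R D d n t l U V W L omega v c c' =
  \sum_k omega 0 k * ptrace_outer (projected U V W L k) (evolved U W k) c c'.
Proof.
rewrite /rho_l; under eq_bigr do under eq_bigr do rewrite full_op_outer.
rewrite big_ptrace_cond exchange_big /=; apply: eq_bigr => k _.
by rewrite /ptrace_outer mulr_sumr.
Qed.

Lemma optr_rho_l :
  optr (@rho_l R D d n t l U V W L omega v) =
  \sum_k omega 0 k * vdot (projected U V W L k) (evolved U W k).
Proof.
rewrite /optr; under eq_bigr do rewrite rho_l_mixture.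
by rewrite exchange_big /=; apply: eq_bigr => k _; rewrite vdot_ptrace mulr_sumr.
Qed.

End PartialTrace.

Section Lipschitz.
Variables (R : realType) (D d n t l : nat) (z0 : 'I_d).
Variables (omega : 'rV[R[i]]_D) (v : 'cV[R[i]]_d).
Hypotheses (omega_ge0 : forall i, 0 <= omega 0 i) (omega_sum1 : \sum_(i < D) omega 0 i = 1).
Hypothesis v_unit : \sum_(i < d) `|v i 0| ^+ 2 = 1.
Local Notation C := R[i].
Local Notation rho U V W L := (@rho_l R D d n t l U V W L omega v).
Local Notation projected := (@projected R D d n v).
Local Notation evolved := (@evolved R D d n v).

Lemma norm_optr_rho_le1 (U : 'M[C]_(D * d)) (V W : 'M[C]_D) (L : 'rV[C]_D) :
  U \is unitarymx -> V \is unitarymx -> W \is unitarymx -> (forall i, 0 <= L 0 i <= 1) ->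
  `|optr (rho U V W L)| <= 1.
Proof.
move=> uU uV uW L01; rewrite (optr_rho_l n t l z0).
by apply: norm_mixture_le => // k; exact: vdot_projected_evolved_le1.
Qed.

Lemma ophs_rho_le1 (U : 'M[C]_(D * d)) (V W : 'M[C]_D) (L : 'rV[C]_D) :
  U \is unitarymx -> V \is unitarymx -> W \is unitarymx -> (forall i, 0 <= L 0 i <= 1) ->
  ophs (rho U V W L) <= 1.
Proof.
move=> uU uV uW L01; rewrite (eq_ophs (rho_l_mixture z0 _ _ _ _ _ _)).
apply: ophs_mixture_le => // k; apply: le_trans (ophs_ptrace_outer_le t l z0 _ _) _.
by rewrite -[X in _ <= X]mul1r ler_pM ?vnorm_ge0 ?vnorm_projected_le1 ?vnorm_evolved_le1.
Qed.

Variables (U U' : 'M[C]_(D * d)) (V V' W W' : 'M[C]_D) (L L' : 'rV[C]_D).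
Hypotheses (uU : U \is unitarymx) (uU' : U' \is unitarymx).
Hypotheses (uV : V \is unitarymx) (uV' : V' \is unitarymx).
Hypotheses (uW : W \is unitarymx) (uW' : W' \is unitarymx).
Hypotheses (L01 : forall i, 0 <= L 0 i <= 1) (L'01 : forall i, 0 <= L' 0 i <= 1).
Local Notation dist := (dist_projected n U U' V V' W W' L L' + dist_evolved n U U' W W').

Lemma norm_optr_rhoB : `|optr (rho U V W L) - optr (rho U' V' W' L')| <= dist.
Proof.
rewrite !(optr_rho_l n t l z0) -sumrB; under eq_bigr do rewrite -mulrBr.
by apply: norm_mixture_le => // k; exact: vdot_projected_evolvedB.
Qed.

Lemma ophs_rhoB : ophs (fun c c' => rho U V W L c c' - rho U' V' W' L' c c') <= dist.
Proof.
pose pa k := projected U V W L k; pose pa' k := projected U' V' W' L' k.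
pose ev k := evolved U W k; pose ev' k := evolved U' W' k.
rewrite (@eq_ophs _ _ _ (fun c c' => \sum_k omega 0 k *
   (ptrace_outer z0 (fun x => pa k x - pa' k x) (ev k) c c' +
    ptrace_outer z0 (pa' k) (fun x => ev k x - ev' k x) c c'))); last first.
  move=> c c'; rewrite !(rho_l_mixture z0) -sumrB; apply: eq_bigr => k _.
  by rewrite -mulrBr -ptrace_outerBl -ptrace_outerBr addrA subrK.
apply: ophs_mixture_le => // k.
apply: le_trans (vnormD_le (fun p => ptrace_outer z0 (fun x => pa k x - pa' k x) (ev k) p.1 p.2)
                           (fun p => ptrace_outer z0 (pa' k) (fun x => ev k x - ev' k x) p.1 p.2)) _.
apply: lerD; apply: le_trans (ophs_ptrace_outer_le t l z0 _ _) _.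
  by rewrite -[X in _ <= X]mulr1 ler_pM ?vnorm_ge0 ?vnorm_projectedB ?vnorm_evolved_le1.
by rewrite -[X in _ <= X]mul1r ler_pM ?vnorm_ge0 ?vnorm_projected_le1 ?vnorm_evolvedB.
Qed.

Lemma f_funB : `|f_fun n t l U V W L omega v - f_fun n t l U' V' W' L' omega v| <= 2 * dist.
Proof.
rewrite /f_fun subr_sqr normrM mulrC ler_pM ?normr_ge0 ?norm_optr_rhoB //.
apply: le_trans (ler_normD _ _) _.
by rewrite -[2]/(1 + 1) lerD ?norm_optr_rho_le1.
Qed.

Lemma g_funB : `|g_fun n t l U V W L omega v - g_fun n t l U' V' W' L' omega v| <= 2 * dist.
Proof.
pose delta c c' := rho U V W L c c' - rho U' V' W' L' c c'.
have -> : g_fun n t l U V W L omega v - g_fun n t l U' V' W' L' omega v =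
    optr (opmul delta (rho U V W L)) + optr (opmul (rho U' V' W' L') delta).
  rewrite /g_fun /optr /opmul -big_split -sumrB; apply: eq_bigr => c _.
  by rewrite -big_split -sumrB; apply: eq_bigr => z _; rewrite /delta /=; ring.
apply: le_trans (ler_normD _ _) _; rewrite mulr2n mulrDl mul1r.
apply: lerD; apply: le_trans (norm_optr_opmul_le _ _) _.
  by rewrite -[X in _ <= X]mulr1 ler_pM ?ophs_ge0 ?ophs_rhoB ?ophs_rho_le1.
by rewrite -[X in _ <= X]mul1r ler_pM ?ophs_ge0 ?ophs_rhoB ?ophs_rho_le1.
Qed.

End Lipschitz.

Lemma dist_le_d1 (R : realType) (D d n : nat) (U U' : 'M[R[i]]_(D * d))
    (V V' W W' : 'M[R[i]]_D) (L L' : 'rV[R[i]]_D) :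
  2 * (dist_projected n U U' V V' W W' L L' + dist_evolved n U U' W W')
    <= (4 * n + 10)%:R * d1 U U' V V' W W' L L'.
Proof.
rewrite /dist_projected /dist_evolved /d1 -subr_ge0.
set u := HSnorm (U - U'); set a := HSnorm (V - V'); set w := HSnorm (W - W').
set b := supnorm (L - L').
have -> : (4 * n + 10)%:R * (u + a + w + b) - 2 * (w + n%:R * u + (2 * a + b) + (w + n%:R * u)) =
    10 * u + (4 * n%:R + 6) * a + (4 * n%:R + 6) * w + (4 * n%:R + 8) * b.
  by rewrite natrD natrM; ring.
by rewrite !addr_ge0 ?mulr_ge0 ?addr_ge0 ?mulr_ge0 ?ler0n ?HSnorm_ge0 ?supnorm_ge0.
Qed.

Unset Implicit Arguments.
Theorem theorem7 (R : realType) (d D t l n : nat) :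
  (1 <= d)%N -> (1 <= D)%N -> (1 <= t)%N -> (1 <= l)%N -> n = (2 * t + l)%N ->
  forall (omega : 'rV[R[i]]_D),
  (forall i, 0 <= omega 0 i) -> \sum_(i < D) omega 0 i = 1 ->
  forall (v : 'cV[R[i]]_d), \sum_(i < d) `|v i 0| ^+ 2 = 1 ->
  forall (U U' : 'M[R[i]]_(D * d)) (V V' W W' : 'M[R[i]]_D)
         (Lam Lam' : 'rV[R[i]]_D),
  U \is unitarymx -> U' \is unitarymx ->
  V \is unitarymx -> V' \is unitarymx ->
  W \is unitarymx -> W' \is unitarymx ->
  (forall i, 0 <= Lam 0 i <= 1) -> (forall i, 0 <= Lam' 0 i <= 1) ->
  `|f_fun n t l U V W Lam omega v - f_fun n t l U' V' W' Lam' omega v|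
     <= (4 * n + 10)%:R * d1 U U' V V' W W' Lam Lam'
  /\
  `|g_fun n t l U V W Lam omega v - g_fun n t l U' V' W' Lam' omega v|
     <= (4 * n + 10)%:R * d1 U U' V V' W W' Lam Lam'.
Proof.
move=> d_gt0 _ _ _ _ omega omega_ge0 omega_sum1 v v_unit U U' V V' W W' L L'
  uU uU' uV uV' uW uW' L01 L'01.
(* Only [d >= 1] is needed, to provide the junk index [z0]; the bound holds for all t, l, n. *)
pose z0 : 'I_d := Ordinal d_gt0.
split; apply: le_trans (dist_le_d1 _ _ _ _ _ _ _ _ _).
- exact: (f_funB n t l z0 omega_ge0 omega_sum1 v_unit uU uU' uV uV' uW uW' L01 L'01).
- exact: (g_funB n t l z0 omega_ge0 omega_sum1 v_unit uU uU' uV uV' uW uW' L01 L'01).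
Qed.
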